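(* Let $\mathcal H$ be a hypergraph and, for $n\ge 0$, let $\mathcal H^n$ be its $n$-skeleton (with $\mathcal H^{-1}=\emptyset$). Then for all $i,n\ge 0$, $$H_i(\mathcal H^n,\mathcal H^{n-1})=\begin{cases}0,& i\ne n,\\ \mathrm{Inf}_n(\mathcal H),& i=n,\end{cases}$$ where $H_i(\cdot,\cdot)$ is relative embedded homology.
   Context: A hypergraph is a finite set $\mathcal H$ of nonempty finite subsets of a vertex set; elements are hyperedges, and a hyperedge with $n+1$ vertices has dimension $n$. The $n$-skeleton $\mathcal H^n$ is the sub-hypergraph of all hyperedges of dimension at most $n$. The associated simplicial complex is $\Delta\mathcal H=\{\sigma\ne\emptyset:\sigma\subseteq\tau\text{ for some }\tau\in\mathcal H\}$. Fix an abelian coefficient group $G$; $C_*(\Delta\mathcal H)$ is the simplicial chain complex with coefficients in $G$ and boundary $\partial$, $G(\mathcal H)_n$ the $G$-linear combinations of $n$-hyperedges of $\mathcal H$, and $\mathrm{Inf}_n(\mathcal H)=G(\mathcal H)_n\cap\partial_n^{-1}(G(\mathcal H)_{n-1})$. For $\mathcal A\subseteq\mathcal H$, the relative embedded homology is $H_n(\mathcal H,\mathcal A)=H_n(\mathrm{Inf}_*(\mathcal H)/\mathrm{Inf}_*(\mathcal A))$. *)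

From mathcomp Require Import all_boot all_order all_algebra.
Set Implicit Arguments. Unset Strict Implicit. Unset Printing Implicit Defensive.
Import Order.TTheory GRing.Theory Num.Theory.
Local Open Scope ring_scope.

Section Hypergraphs.
Variables (V : finType) (G : zmodType).

Definition hypergraph (H : {set {set V}}) : Prop := set0 \notin H.

(* n-skeleton H^n : hyperedges of dimension <= n, i.e. with <= n+1 vertices.
   Indexed by an integer so that H^{-1} = skel H (-1) is empty. *)
Definition skel (H : {set {set V}}) (n : int) : {set {set V}} :=
  [set s in H | (Posz #|s| <= n + 1)%R].

(* Simplicial chains with coefficients in G: a chain assigns a coefficient to
   each simplex (nonempty subset of V); an n-chain is supported on sets with
   n+1 vertices. Simplices are oriented by the fixed order enum_rank on V. *)
Definition chain := {ffun {set V} -> G}.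

(* Simplicial boundary: (bd c)(t) = sum over v notin t of (-1)^(position of v
   in t U {v}) * c(t U {v}); no augmentation (bd of a 0-chain is 0). *)
Definition bd (c : chain) : chain :=
  [ffun t : {set V} => if t == set0 then 0 else
     \sum_(v | v \notin t)
        (if odd #|[set u in t | (enum_rank u < enum_rank v)%N]|
         then - c (v |: t) else c (v |: t))].

Definition GH (H : {set {set V}}) (n : nat) (c : chain) : Prop :=
  forall s, c s != 0 -> (s \in H) && (#|s| == n.+1)%N.

Definition GHprev (H : {set {set V}}) (n : nat) (c : chain) : Prop :=
  if n is n'.+1 then GH H n' c else c = 0.

Definition Inf (H : {set {set V}}) (n : nat) (c : chain) : Prop :=
  GH H n c /\ GHprev H n (bd c).

Definition Infprev (H : {set {set V}}) (n : nat) (c : chain) : Prop :=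
  if n is n'.+1 then Inf H n' c else c = 0.

(* Cycles of the quotient complex Inf_*(H)/Inf_*(A) in degree n, as
   representatives: c in Inf_n(H) with bd c in Inf_{n-1}(A). *)
Definition relcycle (H A : {set {set V}}) (n : nat) (c : chain) : Prop :=
  Inf H n c /\ Infprev A n (bd c).

(* Boundaries of the quotient complex in degree n, as representatives:
   c = bd b + a with b in Inf_{n+1}(H), a in Inf_n(A). *)
Definition relboundary (H A : {set {set V}}) (n : nat) (c : chain) : Prop :=
  exists b, Inf H n.+1 b /\ Inf A n (c - bd b).

Definition relhom_trivial (H A : {set {set V}}) (n : nat) : Prop :=
  forall c, relcycle H A n c -> relboundary H A n c.

(* H_n(H, A) = Z_n / B_n is isomorphic to the subgroup M of chains:
   (first isomorphism theorem) there is a group homomorphism from the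
   relative cycles onto M whose kernel is exactly the relative boundaries. *)
Definition relhom_iso (H A : {set {set V}}) (n : nat) (M : chain -> Prop)
  : Prop :=
  exists f : chain -> chain,
    [/\ forall x y, relcycle H A n x -> relcycle H A n y ->
          f (x - y) = f x - f y,
        forall z, relcycle H A n z -> M (f z),
        forall m, M m -> exists2 z, relcycle H A n z & f z = m
      & forall z, relcycle H A n z -> (f z = 0 <-> relboundary H A n z)].

End Hypergraphs.

From mathcomp Require Import all_boot all_order all_algebra.
Import GRing.Theory Num.Theory.
Local Open Scope ring_scope.

(* Write H^n for the n-skeleton.  The whole computation rests on one
   algebraic fact, d o d = 0 for the simplicial boundary [bd]
   ([bd_bd]); it is proved by pairing the two ways of deleting two
   vertices, whose signs differ ([antisym_sum_eq0]).  Consequently the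
   boundary of an infimum chain is again an infimum chain ([Inf_bd]).

   Everything else is bookkeeping on sizes of hyperedges: an i-chain
   supported on H^n vanishes when i > n ([GH_small]), is supported on
   H^(n-1) when i < n ([Inf_mono]), and when i = n the relative cycles of
   (H^n, H^(n-1)) are exactly Inf_n(H) ([relcycle_skel_top]) while the
   relative boundaries are 0 ([relboundary_skel_top]), because H^n has no
   (n+1)-hyperedges and H^(n-1) no n-hyperedges.  Hence H_i vanishes for
   i <> n, and for i = n the identity map realises H_n = Inf_n(H).
   The argument never uses that hyperedges are nonempty. *)

Section HypergraphHomology.
Local Set Implicit Arguments.
Local Unset Strict Implicit.
Context {V : finType} {G : zmodType}.
Implicit Types (t : {set V}) (c : chain V G) (H A : {set {set V}}).

Definition signed (b : bool) (x : G) : G := if b then - x else x.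

Lemma signed_sum b (I : finType) (P : pred I) (F : I -> G) :
  signed b (\sum_(i | P i) F i) = \sum_(i | P i) signed b (F i).
Proof. by case: b => //=; rewrite sumrN. Qed.

Lemma signedK b b' x : signed b (signed b' x) = signed (b (+) b') x.
Proof. by case: b; case: b' => //=; rewrite opprK. Qed.

Definition ordv (u v : V) : bool := (enum_rank u < enum_rank v)%N.

Lemma ordvv v : ordv v v = false.
Proof. exact: ltnn. Qed.

Lemma ordvC v w : w != v -> ordv w v = ~~ ordv v w.
Proof.
move=> wv; rewrite /ordv; case: ltngtP => // /ord_inj/enum_rank_inj evw.
by rewrite evw eqxx in wv.
Qed.

(* Parity of the number of vertices of t preceding v: the sign with which
   the face t occurs in the boundary of v |: t. *)
Definition pos_odd t (v : V) : bool := odd #|[set u in t | ordv u v]|.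

Lemma bdE c t : t != set0 ->
  bd c t = \sum_(v | v \notin t) signed (pos_odd t v) (c (v |: t)).
Proof. by move=> t0; rewrite ffunE (negbTE t0). Qed.

Lemma pos_odd_U1 t v w : v \notin t -> pos_odd (v |: t) w = pos_odd t w (+) ordv v w.
Proof.
move=> vt; rewrite /pos_odd.
have -> : [set u in v |: t | ordv u w] =
    if ordv v w then v |: [set u in t | ordv u w] else [set u in t | ordv u w].
  apply/setP=> u; case vw: (ordv v w); rewrite !inE;
    by case: (eqVneq u v) => [->|] //=; rewrite ?vw ?(negbTE vt).
case: (ordv v w); last by rewrite addbF.
by rewrite cardsU1 inE (negbTE vt) addbT.
Qed.

(* Cancellation in pairs: a double sum over ordered pairs of distinct
   indices of a symmetric term, signed by the order of the pair, is 0.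
   Each unordered pair contributes -K v w + K w v = 0 (no division by 2,
   so this holds over any abelian group). *)
Lemma antisym_sum_eq0 (P : pred V) (K : V -> V -> G) :
    (forall v w, K v w = K w v) ->
  \sum_(v | P v) \sum_(w | P w && (w != v)) signed (ordv v w) (K v w) = 0.
Proof.
move=> KC.
have splitw v : \sum_(w | P w && (w != v)) signed (ordv v w) (K v w) =
    \sum_(w | P w && ordv v w) - K v w + \sum_(w | P w && ordv w v) K v w.
  rewrite (bigID (ordv v)) /=; congr (_ + _); apply: eq_big => w.
  - by case: (eqVneq w v) => [->|]; rewrite ?ordvv ?andbF ?andbT.
  - by case/andP=> _ ->.
  - by case: (eqVneq w v) => [->|wv]; rewrite /= ?ordvv ?andbF ?andbT // (ordvC wv).
  - by case/andP=> _ /negbTE vw; rewrite /signed vw.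
rewrite (eq_bigr _ (fun v _ => splitw v)) big_split /=.
rewrite [X in _ + X](exchange_big_dep P) /=; last by move=> ? ? _ /andP[].
rewrite -big_split big1 // => v Pv.
have -> : \sum_(w | [&& P w, P v & ordv v w]) K w v = \sum_(w | P w && ordv v w) K w v.
  by apply: eq_bigl => w; rewrite Pv.
rewrite -big_split big1 // => w _.
by rewrite /= KC addNr.
Qed.

(* d o d = 0: the coefficient of bd (bd c) at t is such an antisymmetric
   double sum over the two vertices deleted from v |: w |: t. *)
Lemma bd_bd c : bd (bd c) = 0.
Proof.
apply/ffunP=> t; rewrite [RHS]ffunE.
case: (eqVneq t set0) => [->|t0]; first by rewrite ffunE eqxx.
pose K v w := signed (pos_odd t v (+) pos_odd t w) (c (v |: (w |: t))).
rewrite -(@antisym_sum_eq0 (fun v => v \notin t) K) => [|v w]; last first.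
  by rewrite /K addbC setUCA.
rewrite bdE //; apply: eq_bigr => v vt.
have vt0 : v |: t != set0 by apply/set0Pn; exists v; rewrite setU11.
rewrite bdE // signed_sum; apply: eq_big => [w|w]; first by rewrite !inE negb_or andbC.
rewrite !inE negb_or => /andP[wv _].
by rewrite pos_odd_U1 // /K !signedK setUCA addbA addbC.
Qed.

Lemma bd0 : bd (0 : chain V G) = 0.
Proof.
apply/ffunP=> t; rewrite !ffunE; case: ifP => // _.
by rewrite big1 // => v _; rewrite ffunE; case: ifP; rewrite ?oppr0.
Qed.

Lemma Inf0 H n : Inf H n (0 : chain V G).
Proof.
split; first by move=> s; rewrite ffunE eqxx.
by rewrite bd0; case: n => // n s; rewrite ffunE eqxx.
Qed.

Lemma GH_small H n c : (forall s, s \in H -> #|s| <= n)%N -> GH H n c -> c = 0.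
Proof.
move=> small GHc; apply/ffunP=> s; rewrite ffunE; apply/eqP/negP=> /negP.
by move/GHc=> /andP[/small sn /eqP sz]; rewrite sz ltnn in sn.
Qed.

Lemma GH_mono H A n c :
  (forall s, s \in H -> #|s| = n.+1 -> s \in A) -> GH H n c -> GH A n c.
Proof. by move=> HA GHc s /GHc /andP[sH /eqP sn]; rewrite (HA _ sH sn) sn eqxx. Qed.

Lemma Inf_mono H A n c :
  (forall s, s \in H -> #|s| <= n.+1 -> s \in A)%N -> Inf H n c -> Inf A n c.
Proof.
move=> HA [GHc GHbd]; split.
  by apply: GH_mono GHc => s sH sn; rewrite HA // sn.
case: n HA {GHc} GHbd => [//|n] HA /=.
by apply: GH_mono => s sH sn; rewrite HA // sn.
Qed.

Lemma Infprev_mono H A n c :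
  (forall s, s \in H -> #|s| <= n -> s \in A)%N -> Infprev H n c -> Infprev A n c.
Proof. by case: n => [_ //|n]; apply: Inf_mono. Qed.

Lemma Inf_bd H n c : Inf H n.+1 c -> Inf H n (bd c).
Proof.
case=> _ GHbd; split=> //; rewrite bd_bd.
by case: n GHbd => // n _ s; rewrite ffunE eqxx.
Qed.

Lemma Infprev_bd H n c : Inf H n c -> Infprev H n (bd c).
Proof. by case: n => [[]|n /Inf_bd]. Qed.

Lemma relboundary_of_Inf H A n c : Inf A n c -> relboundary H A n c.
Proof. by move=> Ac; exists 0; rewrite bd0 subr0; split=> //; apply: Inf0. Qed.

Section Skeleta.
Variable H : {set {set V}}.

Lemma mem_skel s (n : nat) : (s \in skel H n%:Z) = (s \in H) && (#|s| <= n.+1)%N.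
Proof. by rewrite inE -PoszD lez_nat addn1. Qed.

Lemma mem_skel_pred s (n : nat) : (s \in skel H (n%:Z - 1)) = (s \in H) && (#|s| <= n)%N.
Proof. by rewrite inE subrK lez_nat. Qed.

Lemma relcycle_skel_low i n c : (i < n)%N ->
  relcycle (skel H n%:Z) (skel H (n%:Z - 1)) i c -> Inf (skel H (n%:Z - 1)) i c.
Proof.
move=> lt_in [Ic _]; apply: Inf_mono Ic => s.
by rewrite mem_skel mem_skel_pred => /andP[-> _] /leq_trans->.
Qed.

(* Above it, H^n has no hyperedges of the right size, so they vanish. *)
Lemma relcycle_skel_high i n c : (n < i)%N ->
  relcycle (skel H n%:Z) (skel H (n%:Z - 1)) i c -> c = 0.
Proof.
move=> lt_ni [[GHc _] _]; apply: GH_small GHc => s.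
by rewrite mem_skel => /andP[_ /leq_trans]; apply.
Qed.

Lemma relcycle_skel_top n c :
  relcycle (skel H n%:Z) (skel H (n%:Z - 1)) n c <-> Inf H n c.
Proof.
split=> [[Ic _]|Ic].
  by apply: Inf_mono Ic => s; rewrite mem_skel => /andP[].
split; first by apply: Inf_mono Ic => s sH sn; rewrite mem_skel sH.
by apply: Infprev_mono (Infprev_bd Ic) => s sH sn; rewrite mem_skel_pred sH.
Qed.

(* In degree n, the only relative boundary is 0: Inf_(n+1)(H^n) = 0 and
   Inf_n(H^(n-1)) = 0. *)
Lemma relboundary_skel_top n c :
  relboundary (skel H n%:Z) (skel H (n%:Z - 1)) n c -> c = 0.
Proof.
case=> b [[GHb _] [GHcb _]].
have b0 : b = 0 by apply: GH_small GHb => s; rewrite mem_skel => /andP[].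
move: GHcb; rewrite b0 bd0 subr0; apply: GH_small => s.
by rewrite mem_skel_pred => /andP[].
Qed.
End Skeleta.
End HypergraphHomology.

Theorem mainTheorem4 (V : finType) (G : zmodType) (H : {set {set V}}) :
  hypergraph H ->
  forall i n : nat,
    (i <> n ->
       @relhom_trivial V G (skel H n%:Z) (skel H (n%:Z - 1)) i) /\
    (i = n ->
       @relhom_iso V G (skel H n%:Z) (skel H (n%:Z - 1)) n (@Inf V G H n)).
Proof.
move=> _ i n; split=> [ne_in c zc | _].
  apply: relboundary_of_Inf.
  case: (ltngtP i n) ne_in => [lt_in _|lt_ni _|//].
    exact: relcycle_skel_low zc.
  by rewrite (relcycle_skel_high lt_ni zc); apply: Inf0.
exists id; split=> // [z /relcycle_skel_top //|m Im|z zc].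
  by exists m => //; apply/relcycle_skel_top.
split=> [->|/relboundary_skel_top //].
by apply: relboundary_of_Inf; apply: Inf0.
Qed.
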